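(* Let $S,T$ be numberings of shape $\lambda\vdash n$, let $1\le i\le\ell(\lambda)-1$ and $1\le j\le\lambda_{i+1}$. Then \[ v_S^T=(-1)^j\sum_{U\in\Xi_{i,j}(S)}v_U^T . \]
   Context: Permutations in $\mathfrak S_n$ act on $[n]$, products are compositions $(\sigma\tau)(k)=\sigma(\tau(k))$. A numbering of shape $\lambda\vdash n$ is a filling of the Young diagram of $\lambda$ (rows indexed top to bottom; $\ell(\lambda)$ = number of rows) with $1,\dots,n$, each exactly once. For $\pi\in\mathfrak S_n$, $\pi\cdot T$ replaces each entry $k$ by $\pi(k)$; $\sigma_{T,S}$ is the unique permutation with $\sigma_{T,S}\cdot T=S$. $R(T)$, $C(T)$ are the row and column groups; $a_T=\sum_{\rho\in R(T)}\rho$, $b_T=\sum_{\zeta\in C(T)}\operatorname{sgn}(\zeta)\zeta$, and $v_S^T=\sigma_{S,T}\,b_S\,a_S\in\mathbb C[\mathfrak S_n]$. Let $J$ be the set of the first (leftmost) $j$ entries of row $i+1$ of $S$. The set $\Xi_{i,j}(S)$ consists of the numberings obtained from $S$, one for each $j$-element subset $B$ of the entries of row $i$ of $S$, by moving the entries of $J$ to the positions in row $i$ previously occupied by $B$ and the entries of $B$ to the positions in row $i+1$ previously occupied by $J$, preserving relative left-to-right order within each subset. *)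

From HB Require Import structures.
From mathcomp Require Import all_boot all_order all_algebra all_fingroup all_field.
Set Implicit Arguments. Unset Strict Implicit. Unset Printing Implicit Defensive.
Import GRing.Theory.
Local Open Scope ring_scope.

(* Entries 1..n of the paper are represented by 'I_n = {0,..,n-1}; rows are
   0-indexed.  A numbering is a list of rows (top to bottom), each row a list
   of entries (left to right). *)
Notation numbering n := (seq (seq 'I_n)).

Definition is_partition (n : nat) (lam : seq nat) : bool :=
  [&& sorted geq lam, all (fun k => 0 < k)%N lam & sumn lam == n].

(* T is a numbering of shape lam: rows of lengths lam, entries pairwise
   distinct (so, as sumn lam = n, each of 1..n occurs exactly once). *)
Definition is_numbering (n : nat) (lam : seq nat) (T : numbering n) : bool :=
  (shape T == lam) && uniq (flatten T).

(* Paper's composition (sigma tau)(k) = sigma (tau k).  In MathComp,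
   (s * t) x = t (s x), hence sigma o tau = tau * sigma. *)
Definition pcomp (n : nat) (s t : {perm 'I_n}) : {perm 'I_n} := (t * s)%g.

Definition pact (n : nat) (pi : {perm 'I_n}) (T : numbering n) : numbering n :=
  map (map pi) T.

Definition sigmaTS (n : nat) (T S : numbering n) : {perm 'I_n} :=
  if [pick s : {perm 'I_n} | pact s T == S] is Some s then s else 1%g.

Definition row_of (n : nat) (T : numbering n) (x : 'I_n) : nat :=
  find (fun r => x \in r) T.
Definition col_of (n : nat) (T : numbering n) (x : 'I_n) : nat :=
  index x (nth [::] T (row_of T x)).

Definition Rgrp (n : nat) (T : numbering n) : {set {perm 'I_n}} :=
  [set s : {perm 'I_n} | [forall x, row_of T (s x) == row_of T x]].
Definition Cgrp (n : nat) (T : numbering n) : {set {perm 'I_n}} :=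
  [set s : {perm 'I_n} | [forall x, col_of T (s x) == col_of T x]].

(* The group algebra C[S_n]: an element is its coefficient function. *)
Notation GA n := {ffun {perm 'I_n} -> algC}.

Definition gel (n : nat) (s : {perm 'I_n}) : GA n := [ffun p => (p == s)%:R].

Definition gmul (n : nat) (f g : GA n) : GA n :=
  [ffun p => \sum_(s : {perm 'I_n}) \sum_(t : {perm 'I_n} | pcomp s t == p)
               f s * g t].

Definition gscale (n : nat) (c : algC) (f : GA n) : GA n := [ffun p => c * f p].

Definition sgnp (n : nat) (s : {perm 'I_n}) : algC := (-1) ^+ odd_perm s.

Definition aT (n : nat) (T : numbering n) : GA n :=
  \sum_(r in Rgrp T) gel r.
Definition bT (n : nat) (T : numbering n) : GA n :=
  \sum_(z in Cgrp T) gscale (sgnp z) (gel z).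

Definition vST (n : nat) (S T : numbering n) : GA n :=
  gmul (gmul (gel (sigmaTS S T)) (bT S)) (aT S).

Fixpoint repl (A : Type) (m : bitseq) (r s : seq A) : seq A :=
  match m, r with
  | b :: m', x :: r' =>
      if b then head x s :: repl m' r' (behead s) else x :: repl m' r' s
  | _, _ => r
  end.

(* The element of Xi_{i,j}(S) associated with the set B of positions in
   (0-indexed) row i of S: J = first j entries of row i+1 are moved to the
   positions of B in row i, the entries at positions B are moved (in order)
   to the first j positions of row i+1. *)
Definition XiElt (n : nat) (S : numbering n) (i j : nat)
    (B : {set 'I_(size (nth [::] S i))}) : numbering n :=
  let r := nth [::] S i in
  let r' := nth [::] S i.+1 in
  let m := [seq k \in B | k <- enum 'I_(size r)] in
  set_nth [::] (set_nth [::] S i (repl m r (take j r'))) i.+1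
          (mask m r ++ drop j r').

Arguments XiElt {n} S i j B.

From Pilot Require Import Defs.
Set Warnings "-notation-overridden,-ambiguous-paths,-notation-incompatible-prefix".
From HB Require Import structures.
From mathcomp Require Import all_boot all_order all_algebra all_fingroup all_field.
From mathcomp Require Import zify.
Set Implicit Arguments. Unset Strict Implicit. Unset Printing Implicit Defensive.
Import GRing.Theory Num.Theory.
Local Open Scope ring_scope.

(* The coefficient of [p] in [v_{q.S}^T] is a function of [q^-1] invariant under
   right multiplication by R(S); for [q] permuting rows [i] and [i+1] it is thus a
   function V(Y) of the row [i] Y of [q.S].  For nonempty K in row [i+1], Garnir's
   argument (a transposition between a point of K and row [i], compensated by a
   column transposition) kills the sum of these coefficients over the permutations
   of row [i] and K, hence the sum of V(Y) over the |row i|-subsets Y of row [i]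
   and K.  Mobius inversion over the subsets of the first j entries J of row [i+1]
   turns this into: the sum of V(Y) over J <= Y <= row i + J is (-1)^j V(row i),
   and these Y are the rows [i] of the elements of Xi_{i,j}(S). *)

Section GroupAlgebra.
Variable n : nat.
Implicit Types (s t p : {perm 'I_n}) (F : GA n) (A : {pred {perm 'I_n}}).

Lemma gelE s p : gel s p = (p == s)%:R.
Proof. by rewrite ffunE. Qed.

Lemma sum_gelE A (F : {perm 'I_n} -> GA n) t :
  (forall s, F s t = (t == s)%:R * F s s) ->
  (\sum_(s in A) F s) t = (t \in A)%:R * F t t.
Proof.
move=> Fgel; rewrite sum_ffunE big_mkcond (bigD1 t) //= big1 ?addr0.
  by rewrite Fgel eqxx mul1r; case: (t \in A); rewrite ?mul1r ?mul0r.
by move=> s st; rewrite Fgel eq_sym (negbTE st) mul0r if_same.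
Qed.

Lemma aTE (S : numbering n) t : aT S t = (t \in Rgrp S)%:R.
Proof. by rewrite sum_gelE => [|s]; rewrite !gelE ?eqxx ?mulr1. Qed.

Lemma bTE (S : numbering n) t : bT S t = (t \in Cgrp S)%:R * sgnp t.
Proof. by rewrite sum_gelE => [|s]; rewrite !ffunE ?eqxx ?mulr1 // mulrC. Qed.

Lemma gmul_gelE s F p : gmul (gel s) F p = F (p * s^-1)%g.
Proof.
rewrite ffunE (bigD1 s) //= [X in _ + X]big1 => [|s' s's]; last first.
  by apply: big1 => t _; rewrite gelE (negbTE s's) mul0r.
rewrite addr0 gelE eqxx (big_pred1 (p * s^-1)%g) ?mul1r // => t /=.
by rewrite /Defs.pcomp; apply/eqP/eqP => [<-|->]; rewrite ?mulgK ?mulgKV.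
Qed.

End GroupAlgebra.

Section FibreStabiliser.
Variables (T : finType) (aT : eqType).
Implicit Types (f g : T -> aT) (q r : {perm T}).

Definition fibre_stab f : {set {perm T}} := [set r : {perm T} | [forall x, f (r x) == f x]].

Lemma fibre_stab_group_set f : group_set (fibre_stab f).
Proof.
apply/group_setP; split=> [|a b]; first by rewrite inE; apply/forallP => x; rewrite perm1.
rewrite !inE => /forallP Ha /forallP Hb; apply/forallP => x.
by rewrite permM (eqP (Hb _)) (eqP (Ha _)).
Qed.

Lemma fibre_stab_conj f g q : g =1 f \o q^-1%g -> fibre_stab g = (fibre_stab f :^ q)%g.
Proof.
move=> gE; apply/setP => r; rewrite mem_conjg !inE conjgE invgK.
apply/forallP/forallP => H x; rewrite ?permM.
  by have := H (q x); rewrite !gE /= permK.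
by have := H (q^-1 x)%g; rewrite !gE /= !permM permKV.
Qed.

End FibreStabiliser.

Canonical Rgrp_group n (S : numbering n) :=
  @group _ (Rgrp S) (fibre_stab_group_set (row_of S)).
Canonical Cgrp_group n (S : numbering n) :=
  @group _ (Cgrp S) (fibre_stab_group_set (col_of S)).

(* The coefficient of [p] in [s b_S a_S g], products in the paper's order. *)
Definition vcoef n (S : numbering n) (s g p : {perm 'I_n}) : algC :=
  \sum_(z in Cgrp S) \sum_(r in Rgrp S) sgnp z * ((g * (r * (z * s)))%g == p)%:R.

Lemma vSTE n (S T : numbering n) p : vST S T p = vcoef S (sigmaTS S T) 1 p.
Proof.
rewrite ffunE (reindex_inj (mulIg (sigmaTS S T))) [RHS]big_mkcond /=.
apply: eq_bigr => z _; rewrite gmul_gelE mulgK bTE.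
case: (z \in Cgrp S); last by rewrite big1 // => t _; rewrite !mul0r.
rewrite big_mkcond [RHS]big_mkcond /=; apply: eq_bigr => t _.
rewrite aTE mul1g; case: (t \in Rgrp S); case: eqP => _;
  by rewrite ?mul1r ?mulr1 ?mul0r ?mulr0.
Qed.

Lemma vcoef_mulRgrp n (S : numbering n) (s g h p : {perm 'I_n}) :
  h \in Rgrp S -> vcoef S s (g * h)%g p = vcoef S s g p.
Proof.
move=> hR; apply: eq_bigr => z _; rewrite (reindex_inj (mulgI h^-1%g)) /=.
by apply: eq_big => [r|r _]; rewrite ?groupMl ?groupV // !mulgA mulgK.
Qed.

Section PermutationAction.
Variable n : nat.
Implicit Types (S T : numbering n) (q s t : {perm 'I_n}).

Lemma pactM s t S : pact t (pact s S) = pact (s * t)%g S.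
Proof.
rewrite /pact -map_comp; apply: eq_map => r /=.
by rewrite -map_comp; apply: eq_map => x /=; rewrite permM.
Qed.

Lemma row_of_pact q S x : row_of (pact q S) x = row_of S (q^-1 x)%g.
Proof.
rewrite /row_of find_map; apply: eq_find => r /=.
by rewrite -{1}(permKV q x) mem_map //; apply: perm_inj.
Qed.

Lemma col_of_pact q S x : col_of (pact q S) x = col_of S (q^-1 x)%g.
Proof.
rewrite /col_of row_of_pact; case: (ltnP (row_of S (q^-1 x)%g) (size S)) => hk.
  by rewrite (nth_map [::]) // -{1}(permKV q x) index_map //; apply: perm_inj.
by rewrite !nth_default ?size_map.
Qed.

Lemma Rgrp_pact q S : Rgrp (pact q S) = (Rgrp S :^ q)%g.
Proof. exact: fibre_stab_conj (row_of_pact q S). Qed.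

Lemma Cgrp_pact q S : Cgrp (pact q S) = (Cgrp S :^ q)%g.
Proof. exact: fibre_stab_conj (col_of_pact q S). Qed.

Lemma pact_inj S : (forall x, x \in flatten S) -> injective (fun s => pact s S).
Proof.
move=> fullS s t /eq_in_map st; apply/permP => x.
by have /flattenP[r /st/eq_in_map rst xr] := fullS x; apply: rst.
Qed.

Lemma sigmaTS_pact S T : (exists s, pact s S = T) -> pact (sigmaTS S T) S = T.
Proof.
rewrite /sigmaTS; case: pickP => [s /eqP //| noS] [s sST].
by have := noS s; rewrite sST eqxx.
Qed.

Lemma sigmaTS_pactl q S T : (forall x, x \in flatten S) -> (exists s, pact s S = T) ->
  sigmaTS (pact q S) T = (q^-1 * sigmaTS S T)%g.
Proof.
move=> fullS exT; apply: (mulgI q); apply: (pact_inj fullS).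
rewrite -pactM mulKVg !sigmaTS_pact //.
by exists (q^-1 * sigmaTS S T)%g; rewrite pactM mulKVg sigmaTS_pact.
Qed.

Lemma vST_pact q S T p : (forall x, x \in flatten S) -> (exists s, pact s S = T) ->
  vST (pact q S) T p = vcoef S (sigmaTS S T) q^-1 p.
Proof.
move=> fullS exT; rewrite vSTE (sigmaTS_pactl _ fullS exT) /vcoef.
rewrite Cgrp_pact (reindex_inj (@conjg_inj _ q)); apply: eq_big => [z|z _].
  by rewrite memJ_conjg.
rewrite Rgrp_pact (reindex_inj (@conjg_inj _ q)); apply: eq_big => [r|r _].
  by rewrite memJ_conjg.
by rewrite /sgnp odd_permJ !conjgE !mulgA !mulgK mul1g.
Qed.

End PermutationAction.

Section Tableau.
Variables (n : nat) (S : numbering n).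
Hypothesis uniqS : uniq (flatten S).
Hypothesis fullS : forall x, x \in flatten S.

Definition rowset k : {set 'I_n} := [set x in nth [::] S k].

Lemma uniq_row k : uniq (nth [::] S k).
Proof.
elim: S k uniqS => [|r S' IH] [|k] //=; rewrite cat_uniq => /and3P[ur _ uS'] //.
exact: IH.
Qed.

Lemma row_of_nth k x : x \in nth [::] S k -> row_of S x = k.
Proof.
elim: S k uniqS => [|r S' IH] [|k] //=; rewrite ?nth_nil // ?/row_of /= => + xk.
  by rewrite xk.
rewrite cat_uniq => /and3P[_ /hasPn rS' uS'].
have xS' : x \in flatten S'.
  apply/flattenP; exists (nth [::] S' k) => //; apply: mem_nth.
  by case: ltnP xk => // h; rewrite nth_default.
by rewrite (negbTE (rS' x xS')) -/(row_of S' x) (IH k).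
Qed.

Lemma mem_nth_row_of x : x \in nth [::] S (row_of S x).
Proof.
have /flattenP[r rS xr] := fullS x.
by apply: (@nth_find _ [::] (fun r => x \in r)); apply/hasP; exists r.
Qed.

Lemma row_uniq k k' x : x \in nth [::] S k -> x \in nth [::] S k' -> k = k'.
Proof. by move=> xk xk'; rewrite -(row_of_nth xk) (row_of_nth xk'). Qed.

Lemma row_succ_disjoint k x : x \in nth [::] S k -> x \in nth [::] S k.+1 -> False.
Proof. by move=> xk /(row_uniq xk)/n_Sn. Qed.

Lemma col_of_nth k c x0 : (c < size (nth [::] S k))%N ->
  col_of S (nth x0 (nth [::] S k) c) = c.
Proof. by move=> ck; rewrite /col_of (row_of_nth (mem_nth _ ck)) index_uniq ?uniq_row. Qed.

Lemma row_of_Rgrp r x : r \in Rgrp S -> row_of S (r x) = row_of S x.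
Proof. by rewrite inE => /forallP /(_ x) /eqP. Qed.

End Tableau.

Section SwapPerm.
Variable T : finType.
Implicit Types (s t : seq T) (A X Y : {set T}).

Definition swappable s t :=
  [&& uniq s, uniq t, size s == size t & all (fun y => y \notin t) s].

Definition swap_fun s t x :=
  if swappable s t then
    if x \in s then nth x t (index x s) else if x \in t then nth x s (index x t) else x
  else x.

Lemma swap_funK s t : involutive (swap_fun s t).
Proof.
move=> x; rewrite /swap_fun; case ok: (swappable s t) => //.
case/and4P: ok => us ut /eqP st /allP st_dis.
have [xs|xs] := boolP (x \in s).
  have ixt : (index x s < size t)%N by rewrite -st index_mem.
  have yt := mem_nth x ixt; have /negbTE ys : nth x t (index x s) \notin s.
    by apply: contraL yt; apply: st_dis.
  by rewrite ys yt index_uniq ?nth_index.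
have [xt|xt] := boolP (x \in t); last by rewrite (negbTE xs) (negbTE xt).
have ixs : (index x t < size s)%N by rewrite st index_mem.
by rewrite mem_nth // index_uniq ?nth_index.
Qed.

Definition swap_perm s t : {perm T} := perm (can_inj (swap_funK s t)).

Lemma swap_permE s t x : swap_perm s t x = swap_fun s t x.
Proof. by rewrite permE. Qed.

Lemma swap_perm_out s t x : x \notin s -> x \notin t -> swap_perm s t x = x.
Proof. by move=> /negbTE xs /negbTE xt; rewrite swap_permE /swap_fun xs xt if_same. Qed.

Lemma swap_perm_on s t : perm_on [set x | (x \in s) || (x \in t)] (swap_perm s t).
Proof.
apply/subsetP => x; rewrite !inE; apply: contraR; rewrite negb_or => /andP[xs xt].
by rewrite swap_perm_out.
Qed.

Lemma swappable_sym s t : swappable s t -> swappable t s.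
Proof.
case/and4P => us ut /eqP st /allP dis; rewrite /swappable ut us st eqxx /=.
by apply/allP => y; apply: contraL; apply: dis.
Qed.

Lemma swap_permC s t : swappable s t -> swap_perm s t = swap_perm t s.
Proof.
move=> ok; apply/permP => x; rewrite !swap_permE /swap_fun ok swappable_sym //.
case/and4P: ok => _ _ _ /allP dis; have [xs|//] := boolP (x \in s).
by rewrite (negbTE (dis x xs)).
Qed.

Lemma swap_permV s t : (swap_perm s t)^-1%g = swap_perm s t.
Proof.
by apply/permP => x; apply: (@perm_inj _ (swap_perm s t)); rewrite permKV !swap_permE swap_funK.
Qed.

Lemma map_swap_perm s t : swappable s t -> map (swap_perm s t) s = t.
Proof.
case: s => [|x0 s] ok; case/and4P: (ok) => us _ /eqP st _; first by case: t st {ok}.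
apply: (@eq_from_nth _ x0); rewrite size_map // => k ks.
rewrite (nth_map x0) // swap_permE /swap_fun ok mem_nth // index_uniq //.
by apply: set_nth_default; rewrite -st.
Qed.

Lemma map_swap_perm_r s t : swappable s t -> map (swap_perm s t) t = s.
Proof. by move=> ok; rewrite swap_permC // map_swap_perm // swappable_sym. Qed.

Lemma exists_perm_preim X A Y : A \subset X -> Y \subset X -> #|Y| = #|A| ->
  exists2 c, c \in Sym X & c @^-1: A = Y.
Proof.
move=> AX YX YA; set s := enum (Y :\: A); set t := enum (A :\: Y).
have ok : swappable s t.
  rewrite /swappable !enum_uniq -!cardE !cardsD YA setIC eqxx /=.
  by apply/allP => x; rewrite !mem_enum !inE => /andP[xA xY]; rewrite xY.
exists (swap_perm s t).
  rewrite inE; apply: subset_trans (swap_perm_on s t) _; apply/subsetP => x.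
  by rewrite !inE !mem_enum !inE => /orP[]/andP[_]; [apply: (subsetP YX)|apply: (subsetP AX)].
apply/setP => x; rewrite !inE; have [xs|xs] := boolP (x \in s).
  have := map_f (swap_perm s t) xs; rewrite map_swap_perm //.
  by move: xs; rewrite !mem_enum !inE => /andP[_ ->] /andP[_ ->].
have [xt|xt] := boolP (x \in t).
  have := map_f (swap_perm s t) xt; rewrite map_swap_perm_r //.
  by move: xt; rewrite !mem_enum !inE => /andP[/negbTE -> _] /andP[/negbTE -> _].
rewrite swap_perm_out //; move: xs xt; rewrite !mem_enum !inE.
by case: (x \in A); case: (x \in Y).
Qed.

End SwapPerm.

Section Garnir.
Variables (n : nat) (S : numbering n) (i : nat) (s p : {perm 'I_n}).
Hypothesis uniqS : uniq (flatten S).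
Hypothesis fullS : forall x, x \in flatten S.
Hypothesis row_size : (size (nth [::] S i.+1) <= size (nth [::] S i))%N.

(* [x] is [r^-1 a] for the entry [a] of row [i] in the column of [r y], which
   exists as row [i] is the longer one. *)
Lemma column_transposition r y : r \in Rgrp S -> y \in nth [::] S i.+1 ->
  exists x a b, [/\ x \in nth [::] S i, a != b, tperm a b \in Cgrp S
                  & (tperm x y * r * tperm a b)%g = r].
Proof.
move=> rR yi1; have ryi1 : r y \in nth [::] S i.+1.
  by rewrite -(row_of_nth uniqS yi1) -(row_of_Rgrp _ rR) mem_nth_row_of.
set c := col_of S (r y).
have ci : (c < size (nth [::] S i))%N.
  by rewrite /c /col_of (row_of_nth uniqS ryi1) (leq_trans _ row_size) ?index_mem.
set a := nth y (nth [::] S i) c; have ai : a \in nth [::] S i by apply: mem_nth.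
have ca : col_of S a = c by rewrite col_of_nth.
exists (r^-1 a)%g, a, (r y); split.
- have := mem_nth_row_of fullS (r^-1 a)%g.
  by rewrite -(row_of_Rgrp _ rR) permKV (row_of_nth uniqS ai).
- by apply/eqP => ary; apply: (row_succ_disjoint uniqS ai); rewrite ary.
- by rewrite inE; apply/forallP => x; case: tpermP => [->|->|_ _]; rewrite ?ca.
apply/permP => x; rewrite !permM; case: (tpermP (r^-1 a)%g y x) => [->|->|xa xy].
- by rewrite tpermR permKV.
- by rewrite permKV tpermL.
have ax : a != r x by apply/eqP => axr; apply: xa; rewrite axr permK.
by rewrite tpermD // (inj_eq perm_inj) eq_sym; apply/eqP.
Qed.

Lemma garnir_sum_eq0 (K : {set 'I_n}) y :
  y \in K -> K \subset rowset S i.+1 ->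
  \sum_(g in Sym (rowset S i :|: K)) vcoef S s g p = 0.
Proof.
move=> yK KR; rewrite exchange_big /=; under eq_bigr do rewrite exchange_big /=.
rewrite exchange_big /=; apply: big1 => r rR.
have yi1 : y \in nth [::] S i.+1 by have := subsetP KR y yK; rewrite inE.
have [x [a [b [xi ab abC key]]]] := column_transposition rR yi1.
have xyX : tperm x y \in Sym (rowset S i :|: K).
  rewrite inE; apply: subset_trans (tperm_on x y) _.
  by apply/subsetP => z; rewrite !inE => /orP[]/eqP->; rewrite ?xi ?yK ?orbT.
(* The terms of [(z, g)] and [(tperm a b * z, g * tperm x y)] cancel. *)
apply/eqP; rewrite -eqNr -sumrN (reindex_inj (mulgI (tperm a b))) /=.
apply/eqP/eq_big => [z|z zC]; first by rewrite groupMl.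
rewrite -sumrN (reindex_inj (mulIg (tperm x y))) /=.
apply: eq_big => [g|g _]; first by rewrite groupMr.
rewrite /sgnp odd_mul_tperm ab addTb signrN mulNr opprK.
by rewrite !mulgA -(mulgA g) -(mulgA g) key.
Qed.

Local Notation Ri := (rowset S i).
Local Notation W := (rowset S i :|: rowset S i.+1).

Lemma Rgrp_of_Sym h : h \in Sym W -> h @^-1: Ri = Ri -> h \in Rgrp S.
Proof.
rewrite inE => hW hRi; rewrite inE; apply/forallP => x.
have [xW|xW] := boolP (x \in W); last by rewrite (out_perm hW).
have hxW : h x \in W by rewrite perm_closed.
have /setP/(_ x) := hRi; rewrite !inE => hxi.
have [xi|xni] := boolP (x \in nth [::] S i).
  by rewrite (row_of_nth uniqS xi) (@row_of_nth _ _ uniqS i) // hxi.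
move: xW hxW; rewrite !inE hxi (negbTE xni) /= => xi1 hxi1.
by rewrite (row_of_nth uniqS xi1) (row_of_nth uniqS hxi1).
Qed.

Lemma vcoef_preim g g' : g \in Sym W -> g' \in Sym W ->
  g @^-1: Ri = g' @^-1: Ri -> vcoef S s g p = vcoef S s g' p.
Proof.
move=> gW g'W gg'; rewrite -(mulKVg g g') vcoef_mulRgrp // Rgrp_of_Sym ?groupMr ?groupV //.
apply/setP => x; rewrite !inE permM.
by have /setP/(_ (g^-1 x)%g) := gg'; rewrite !inE permKV => ->.
Qed.

(* By [vcoef_preim], on [Sym W] the coefficient [vcoef S s g p] only depends on
   [g @^-1: Ri], the row [i] of [pact g^-1 S]. *)
Definition tabloid_coef (Y : {set 'I_n}) : algC :=
  vcoef S s (odflt 1%g [pick g in Sym W | g @^-1: Ri == Y]) p.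

Lemma tabloid_coefE g : g \in Sym W -> tabloid_coef (g @^-1: Ri) = vcoef S s g p.
Proof.
move=> gW; rewrite /tabloid_coef; case: pickP => [g' /andP[g'W /eqP g'g]|/(_ g)] /=.
  exact: vcoef_preim.
by rewrite gW eqxx.
Qed.

Lemma sum_Sym_vcoef (K : {set 'I_n}) : K \subset rowset S i.+1 ->
  \sum_(g in Sym (Ri :|: K)) vcoef S s g p =
  #|[set g in Sym (Ri :|: K) | g @^-1: Ri == Ri]|%:R *
  \sum_(Y : {set 'I_n} | (Y \subset Ri :|: K) && (#|Y| == #|Ri|)) tabloid_coef Y.
Proof.
move=> KR; have XW : Ri :|: K \subset W by apply: setUS.
rewrite (partition_big (fun g : {perm 'I_n} => g @^-1: Ri)
          (fun Y => (Y \subset Ri :|: K) && (#|Y| == #|Ri|))) /=; last first.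
  move=> g; rewrite inE => gX; rewrite card_preimset ?eqxx ?andbT; last exact: perm_inj.
  apply/subsetP => x; rewrite inE; apply: contraLR => xX.
  by rewrite (out_perm gX xX); apply: contra xX => xi; rewrite inE xi.
rewrite mulr_sumr; apply: eq_bigr => Y /andP[YX /eqP YRi].
rewrite (eq_bigr (fun _ => tabloid_coef Y)) => [|g /andP[gX /eqP <-]]; last first.
  by rewrite tabloid_coefE // inE; apply: subset_trans XW; rewrite inE in gX.
rewrite sumr_const mulr_natl; congr (_ *+ _).
have [c cX cRi] := exists_perm_preim (subsetUl Ri K) YX YRi.
rewrite -[RHS](card_imset _ (mulgI c)); apply: eq_card => g.
apply/idP/imsetP => [/andP[gX /eqP gY]|[g0]].
  exists (c^-1 * g)%g; last by rewrite mulKVg.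
  rewrite inE groupM ?groupV //=; apply/eqP/setP => x; rewrite !inE permM.
  by have /setP/(_ (c^-1 x)%g) := etrans gY (esym cRi); rewrite !inE permKV.
rewrite inE => /andP[g0X /eqP g0Ri] ->; rewrite unfold_in groupM //=.
apply/eqP/setP => x; rewrite -cRi !inE permM.
by have /setP/(_ (c x)) := g0Ri; rewrite !inE.
Qed.

Lemma tabloid_sum_eq0 (K : {set 'I_n}) : K \subset rowset S i.+1 -> K != set0 ->
  \sum_(Y : {set 'I_n} | (Y \subset Ri :|: K) && (#|Y| == #|Ri|)) tabloid_coef Y = 0.
Proof.
move=> KR /set0Pn[y yK]; have /eqP := garnir_sum_eq0 yK KR.
rewrite sum_Sym_vcoef // mulf_eq0 pnatr_eq0 cards_eq0 => /orP[/eqP stab0|/eqP //].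
have : 1%g \in [set g in Sym (Ri :|: K) | g @^-1: Ri == Ri].
  by rewrite inE group1; apply/eqP/setP => x; rewrite !inE perm1.
by rewrite stab0 inE.
Qed.

End Garnir.

Section Mobius.
Variables (R : numDomainType) (T : finType).
Implicit Types (A J K Y Z : {set T}).

Lemma sum_sign_between A J : A \subset J ->
  \sum_(K : {set T} | (A \subset K) && (K \subset J)) (-1) ^+ #|K| =
  (if A == J then (-1) ^+ #|J| else 0 : R).
Proof.
move=> AJ; have [->|AnJ] := eqVneq A J.
  by rewrite (big_pred1 J) // => K; rewrite /= eqEsubset andbC.
have [x xJ xA] : exists2 x, x \in J & x \notin A.
  by apply/subsetPn; apply: contra AnJ => JA; rewrite eqEsubset AJ.
pose flip K := if x \in K then K :\ x else x |: K.
have flipK : involutive flip.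
  move=> K; rewrite /flip; have [xK|xK] := boolP (x \in K).
    by rewrite setD11 setD1K.
  by rewrite setU11 setU1K.
have flipP K : x \in K ->
    (A \subset K :\ x) && (K :\ x \subset J) = (A \subset K) && (K \subset J).
  move=> xK; have -> : (K \subset J) = (K :\ x \subset J).
    by rewrite -{1}(setD1K xK) subUset sub1set xJ.
  by rewrite subsetD1 xA andbT.
apply/eqP; rewrite -eqNr -sumrN (reindex_inj (can_inj flipK)) /=; apply/eqP.
apply: eq_big => [K|K _]; rewrite /flip; case: ifP => xK.
- exact: flipP.
- by rewrite -(flipP (x |: K)) ?setU11 ?setU1K ?xK.
- by rewrite (cardsD1 x K) xK add1n exprS mulN1r.
by rewrite cardsU1 xK add1n exprS mulN1r opprK.
Qed.

Lemma sum_sign_cover Z J Y : [disjoint Z & J] -> Y \subset Z :|: J ->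
  \sum_(K : {set T} | (K \subset J) && (Y \subset Z :|: K)) (-1) ^+ #|K| =
  (if J \subset Y then (-1) ^+ #|J| else 0 : R).
Proof.
move=> ZJ YZJ; have YDZ : Y :\: Z = Y :&: J.
  apply/setP => y; rewrite !inE; have [yZ|yZ] /= := boolP (y \in Z).
    by rewrite (disjointFr ZJ yZ) andbF.
  apply/idP/andP => [yY|[]//]; split => //.
  by have := subsetP YZJ y yY; rewrite inE (negbTE yZ).
rewrite (eq_bigl (fun K => (Y :&: J \subset K) && (K \subset J))) => [|K /=]; last first.
  by rewrite -subDset YDZ andbC.
rewrite sum_sign_between ?subsetIr //; have [JY|nJY] := boolP (J \subset Y).
  by rewrite (setIidPr JY) eqxx.
by rewrite ifF //; apply: contraNF nJY => /eqP <-; apply: subsetIl.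
Qed.

Lemma mobius_subsets (V : {set T} -> R) Z J : [disjoint Z & J] ->
  (forall K : {set T}, K \subset J -> K != set0 ->
     \sum_(Y : {set T} | (Y \subset Z :|: K) && (#|Y| == #|Z|)) V Y = 0) ->
  \sum_(Y : {set T} | [&& Y \subset Z :|: J, J \subset Y & #|Y| == #|Z|]) V Y = (-1) ^+ #|J| * V Z.
Proof.
move=> ZJ G0.
pose G K := \sum_(Y : {set T} | (Y \subset Z :|: K) && (#|Y| == #|Z|)) V Y.
have sumG : \sum_(K : {set T} | K \subset J) (-1) ^+ #|K| * G K = V Z.
  rewrite (bigD1 set0) ?sub0set //= big1 ?addr0 => [|K /andP[KJ K0]]; last first.
    by rewrite /G G0 ?mulr0.
  rewrite cards0 mul1r /G setU0 (big_pred1 Z) // => Y /=.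
  apply/andP/eqP => [[YZ /eqP YZc]|->//]; apply/eqP.
  by rewrite eqEcard YZ YZc leqnn.
suff -> : V Z = (-1) ^+ #|J| *
    \sum_(Y : {set T} | [&& Y \subset Z :|: J, J \subset Y & #|Y| == #|Z|]) V Y.
  by rewrite signrMK.
rewrite -sumG (eq_bigr (fun K => \sum_(Y : {set T}) if (Y \subset Z :|: K) && (#|Y| == #|Z|)
                                   then (-1) ^+ #|K| * V Y else 0)) => [|K _]; last first.
  by rewrite /G mulr_sumr big_mkcond.
rewrite exchange_big mulr_sumr [RHS]big_mkcond; apply: eq_bigr => Y _ /=.
have [YZ|_] := eqVneq #|Y| #|Z|; last first.
  by rewrite !andbF big1 // => K _; rewrite andbF.
have [YZJ|YZJ] := boolP (Y \subset Z :|: J); last first.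
  rewrite /= big1 // => K KJ; rewrite ifF //; apply: contraNF YZJ => /andP[YK _].
  exact: subset_trans YK (setUS _ KJ).
under eq_bigr do rewrite andbT.
rewrite -big_mkcondr -mulr_suml sum_sign_cover //=.
by case: (J \subset Y); rewrite ?mul0r.
Qed.

End Mobius.

Lemma map_repl (A : eqType) (f : A -> A) (m : bitseq) (r : seq A) :
  size m = size r -> all (fun y => f y == y) (mask (map negb m) r) ->
  map f r = repl m r (map f (mask m r)).
Proof.
elim: r m => [|x r IH] [|[] m] //= [sz]; first by move=> fixr; rewrite -IH.
by case/andP => /eqP -> fixr; rewrite -IH.
Qed.

Lemma mem_mask_negb (A : eqType) (m : bitseq) (r : seq A) x :
  uniq r -> size m = size r ->
  (x \in mask (map negb m) r) = (x \in r) && (x \notin mask m r).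
Proof.
move=> ur sz; rewrite !in_mask //; case xr: (x \in r) => //=.
by rewrite (nth_map false) // sz index_mem.
Qed.

Section XiElements.
Variables (n : nat) (S : numbering n) (i j : nat).
Hypothesis uniqS : uniq (flatten S).
Hypothesis j_le : (j <= size (nth [::] S i.+1))%N.

Local Notation r := (nth [::] S i).
Local Notation r' := (nth [::] S i.+1).
Local Notation J := (take j r').

Definition posmask (B : {set 'I_(size r)}) : bitseq := [seq k \in B | k <- enum 'I_(size r)].

Definition xi_perm B : {perm 'I_n} := swap_perm (mask (posmask B) r) J.

(* The entries of row [i] of [XiElt S i j B]. *)
Definition xi_set B : {set 'I_n} := [set x in mask (map negb (posmask B)) r ++ J].

Implicit Type B : {set 'I_(size r)}.

Lemma size_posmask B : size (posmask B) = size r.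
Proof. by rewrite size_map size_enum_ord. Qed.

Lemma count_posmask B : count id (posmask B) = #|B|.
Proof.
rewrite count_map cardE -size_filter /enum_mem -enumT -filter_predI.
by congr size; apply: eq_filter => x /=; rewrite [x \in 'I__]inE andbT.
Qed.

Lemma nth_posmask B (k : 'I_(size r)) : nth false (posmask B) k = (k \in B).
Proof. by rewrite (nth_map k) ?nth_ord_enum // size_enum_ord. Qed.

Lemma row_J_disjoint x : x \in r -> x \in J -> False.
Proof. by move=> xr /mem_take; apply: row_succ_disjoint. Qed.

Lemma card_J : #|[set x in J]| = j.
Proof. by rewrite cardsE (card_uniqP (take_uniq _ (uniq_row uniqS _))) size_takel. Qed.

Lemma J_subset_row : [set x in J] \subset rowset S i.+1.
Proof. by apply/subsetP => x; rewrite !inE => /mem_take. Qed.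

Lemma disjoint_row_J : [disjoint rowset S i & [set x in J]].
Proof. by apply/pred0P => x /=; rewrite !inE; apply/negP => /andP[/row_J_disjoint]. Qed.

Lemma xi_swappable B : #|B| = j -> swappable (mask (posmask B) r) J.
Proof.
move=> cB; rewrite /swappable mask_uniq ?take_uniq ?uniq_row //=.
rewrite size_mask ?size_posmask // size_takel // count_posmask cB eqxx /=.
by apply/allP => y /mem_mask yr; apply/negP => /(row_J_disjoint yr).
Qed.

Lemma pact_xi_perm B : (i.+1 < size S)%N -> #|B| = j -> pact (xi_perm B) S = XiElt S i j B.
Proof.
move=> iS cB; have ok := xi_swappable cB.
rewrite /XiElt -/(posmask B) /pact /xi_perm; set s := mask _ r.
apply: (@eq_from_nth _ [::]) => [|k].
  by rewrite size_map !size_set_nth (maxn_idPr (ltnW iS)) (maxn_idPr iS).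
rewrite size_map => kS; rewrite (nth_map [::]) // !nth_set_nth /=.
have [->|k_ni1] := eqVneq k i.+1.
  rewrite -[X in map _ X](cat_take_drop j r') map_cat map_swap_perm_r //; congr (_ ++ _).
  apply: map_id_in => y yd; apply: swap_perm_out.
    by apply/negP => /mem_mask yr; apply: (row_succ_disjoint uniqS yr (mem_drop yd)).
  have : uniq (J ++ drop j r') by rewrite cat_take_drop uniq_row.
  by rewrite cat_uniq => /and3P[_ /hasPn Jd _]; apply: Jd.
rewrite nth_set_nth /=; have [->|k_ni] := eqVneq k i.
  rewrite (map_repl (size_posmask B)) ?map_swap_perm //.
  apply/allP => y; rewrite mem_mask_negb ?size_posmask ?uniq_row // => /andP[yr ys].
  by apply/eqP/swap_perm_out => //; apply/negP => /(row_J_disjoint yr).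
apply: map_id_in => y yk; apply: swap_perm_out; apply/negP.
  by move=> /mem_mask yr; rewrite (row_uniq uniqS yk yr) eqxx in k_ni.
by move=> /mem_take yr'; rewrite (row_uniq uniqS yk yr') eqxx in k_ni1.
Qed.

Lemma xi_perm_Sym B : xi_perm B \in Sym (rowset S i :|: rowset S i.+1).
Proof.
rewrite inE; apply: subset_trans (swap_perm_on _ _) _; apply/subsetP => x; rewrite !inE.
by case/orP => [/mem_mask -> | /mem_take ->]; rewrite ?orbT.
Qed.

Lemma preim_xi_perm B : #|B| = j -> xi_perm B @^-1: rowset S i = xi_set B.
Proof.
move=> cB; have ok := xi_swappable cB.
apply/setP => x; rewrite !inE mem_cat mem_mask_negb ?size_posmask ?uniq_row //.
rewrite /xi_perm; set s := mask _ r; have [xs|xs] := boolP (x \in s).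
  have xr := mem_mask xs; have := map_f (swap_perm s J) xs.
  rewrite map_swap_perm // => /mem_take yr'; rewrite xr /=.
  have /negbTE -> : x \notin J by apply/negP; exact: (row_J_disjoint xr).
  by apply/negP => yr; exact: (row_succ_disjoint uniqS yr yr').
have [xJ|xJ] := boolP (x \in J); last by rewrite swap_perm_out // andbT orbF.
by have := map_f (swap_perm s J) xJ; rewrite map_swap_perm_r // orbT => /mem_mask.
Qed.

Lemma card_xi_set B : #|xi_set B| = (size r - #|B| + j)%N.
Proof.
have uJ : uniq (mask (map negb (posmask B)) r ++ J).
  rewrite cat_uniq mask_uniq ?take_uniq ?uniq_row //= andbT.
  by apply/hasPn => y yJ; apply/negP => /mem_mask yr; apply: (row_J_disjoint yr yJ).
rewrite /xi_set cardsE (card_uniqP uJ) size_cat size_mask; last by rewrite size_map size_posmask.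
rewrite size_takel // count_map -(count_posmask B) -(size_posmask B) -(count_predC id).
by rewrite addKn; congr (_ + _)%N; apply: eq_count.
Qed.

Lemma sum_xi_set (R : nmodType) (V : {set 'I_n} -> R) : (j <= size r)%N ->
  \sum_(B : {set 'I_(size r)} | #|B| == j) V (xi_set B) =
  \sum_(Y : {set 'I_n} | [&& Y \subset rowset S i :|: [set x in J],
                          [set x in J] \subset Y & #|Y| == #|rowset S i|]) V Y.
Proof.
move=> j_ler; have ur := uniq_row uniqS i.
have cRi : #|rowset S i| = size r by rewrite cardsE (card_uniqP ur).
symmetry; rewrite (reindex xi_set) /=.
  apply: eq_bigl => B; rewrite cRi card_xi_set.
  have -> : xi_set B \subset rowset S i :|: [set x in J].
    by apply/subsetP => x; rewrite !inE mem_cat => /orP[/mem_mask ->|->]; rewrite ?orbT.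
  have -> : [set x in J] \subset xi_set B.
    by apply/subsetP => x; rewrite !inE mem_cat => ->; rewrite orbT.
  have := max_card (mem B); rewrite card_ord /=.
  by move: #|B| => c cr; apply/eqP/eqP; lia.
exists (fun Y : {set 'I_n} => [set k : 'I_(size r) | tnth (in_tuple r) k \notin Y]).
  move=> B _; apply/setP => k; rewrite !inE mem_cat.
  have kr : tnth (in_tuple r) k \in r by apply: mem_tnth.
  have /negbTE -> : tnth (in_tuple r) k \notin J by apply/negP; apply: row_J_disjoint kr.
  rewrite orbF mem_mask_negb ?size_posmask // in_mask // kr /=.
  by rewrite (tnth_nth (tnth (in_tuple r) k)) index_uniq // nth_posmask negbK.
move=> Y; rewrite inE => /and3P[YRJ JY _]; apply/setP => x.
rewrite inE mem_cat mem_mask_negb ?size_posmask // in_mask //.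
have [xr|xr] /= := boolP (x \in r).
  have /negbTE -> : x \notin J by apply/negP; apply: row_J_disjoint xr.
  have xk : (index x r < size r)%N by rewrite index_mem.
  by rewrite orbF (nth_posmask _ (Ordinal xk)) inE negbK (tnth_nth x) /= nth_index.
have [xJ|xJ] := boolP (x \in J); first by move/subsetP: JY => /(_ x); rewrite inE xJ => ->.
by apply/esym/negP => /(subsetP YRJ); rewrite !inE (negbTE xr) (negbTE xJ).
Qed.

Lemma xi_permV B : (xi_perm B)^-1%g = xi_perm B.
Proof. exact: swap_permV. Qed.

End XiElements.

Lemma partition_nth_succ_le n lam k : is_partition n lam -> (k.+1 < size lam)%N ->
  (nth 0 lam k.+1 <= nth 0 lam k)%N.
Proof.
by case/and3P; case: lam => // a l /(pathP 0) le_nth _ _ /le_nth.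
Qed.

Section Numberings.
Variables (n : nat) (lam : seq nat) (S T : numbering n).
Hypothesis lamP : is_partition n lam.
Hypotheses (SP : is_numbering lam S) (TP : is_numbering lam T).

Lemma size_numbering : size S = size lam.
Proof. by case/andP: SP => /eqP <- _; rewrite size_map. Qed.

Lemma size_nth_numbering k : size (nth [::] S k) = nth 0 lam k.
Proof.
case/andP: SP => /eqP <- _; have [kS|kS] := ltnP k (size S).
  by rewrite (nth_map [::]).
by rewrite !nth_default ?size_map.
Qed.

Lemma numbering_full x : x \in flatten S.
Proof.
case/and3P: lamP => _ _ /eqP sumlam; case/andP: SP => /eqP shS uS.
have /subset_cardP : #|flatten S| = #|'I_n|.
  by rewrite (card_uniqP uS) size_flatten shS sumlam card_ord.
by move=> /(_ (subset_predT _)) ->.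
Qed.

Lemma numbering_pact : exists s, pact s S = T.
Proof.
case/andP: SP => /eqP shS uS; case/andP: TP => /eqP shT uT.
have sz : size (flatten S) = size (flatten T) by rewrite !size_flatten shS shT.
pose f x := nth x (flatten T) (index x (flatten S)).
have fS x : (index x (flatten S) < size (flatten T))%N by rewrite -sz index_mem numbering_full.
have f_inj : injective f.
  move=> x y; rewrite /f (set_nth_default x _ (fS y)) => /eqP.
  rewrite nth_uniq // => /eqP ixy.
  by rewrite -(nth_index x (numbering_full x)) ixy nth_index ?numbering_full.
exists (perm f_inj); rewrite /pact -(flattenK S) map_reshape shS -shT -[RHS]flattenK.
congr reshape; rewrite (eq_map (permE f_inj)) /f.
case: (flatten T) sz uT => [|y0 t] szT _; first by case: (flatten S) szT.
apply: (@eq_from_nth _ y0); rewrite size_map // => k kS.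
by rewrite (nth_map y0) // index_uniq // (set_nth_default y0) -?szT.
Qed.

End Numberings.

Section GarnirRelation.
Variables (n : nat) (S T : numbering n) (i j : nat) (p : {perm 'I_n}).
Hypothesis uniqS : uniq (flatten S).
Hypothesis fullS : forall x, x \in flatten S.
Hypothesis ST : exists s, pact s S = T.

Local Notation V := (tabloid_coef S i (sigmaTS S T) p).

Lemma vST_tabloid_coef : vST S T p = V (rowset S i).
Proof.
rewrite vSTE -(@tabloid_coefE _ S i _ _ uniqS) ?group1 //; congr (tabloid_coef _ _ _ _ _).
by apply/setP => x; rewrite !inE perm1.
Qed.

Lemma vST_XiElt (B : {set 'I_(size (nth [::] S i))}) :
  (i.+1 < size S)%N -> (j <= size (nth [::] S i.+1))%N -> #|B| = j ->
  vST (XiElt S i j B) T p = V (xi_set j B).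
Proof.
move=> iS jS cB; rewrite -pact_xi_perm // vST_pact // xi_permV.
by rewrite -preim_xi_perm // tabloid_coefE // xi_perm_Sym.
Qed.

End GarnirRelation.

Theorem corollary2p16 (n : nat) (lam : seq nat) (S T : numbering n)
  (i j : nat) :
  is_partition n lam -> is_numbering lam S -> is_numbering lam T ->
  (i.+1 < size lam)%N -> (1 <= j)%N -> (j <= nth 0 lam i.+1)%N ->
  vST S T =
  gscale ((-1) ^+ j) (\sum_(B : {set 'I_(size (nth [::] S i))} | #|B| == j)
                 vST (XiElt S i j B) T).
Proof.
move=> lamP SP TP ilam _ jlam; have uniqS : uniq (flatten S) by case/andP: SP.
have fullS := numbering_full lamP SP; have ST := numbering_pact lamP SP TP.
have iS : (i.+1 < size S)%N by rewrite (size_numbering SP).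
have jS : (j <= size (nth [::] S i.+1))%N by rewrite (size_nth_numbering SP).
have rows_le : (size (nth [::] S i.+1) <= size (nth [::] S i))%N.
  by rewrite !(size_nth_numbering SP) (partition_nth_succ_le lamP).
apply/ffunP => p; rewrite [in RHS]ffunE sum_ffunE (vST_tabloid_coef T i p uniqS).
rewrite (eq_bigr _ (fun B cB => vST_XiElt p uniqS fullS ST iS jS (eqP cB))).
rewrite (sum_xi_set uniqS jS) ?(leq_trans jS) // mobius_subsets ?card_J ?signrMK //.
  exact: disjoint_row_J.
move=> K KJ; apply: (tabloid_sum_eq0 _ _ uniqS fullS rows_le).
exact: subset_trans KJ (J_subset_row _ _ _).
Qed.
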